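(* Let $H_0$ be an $n$-qubit stabilizer Hamiltonian with a unique ground state $|\mathbf S\rangle$ and spectral gap $\Delta>0$ (difference between the two lowest distinct eigenvalues). Let $V$ be a Hermitian operator on $(\mathbb C^2)^{\otimes n}$ such that $(\mathbb 1-|\mathbf S\rangle\langle\mathbf S|)V|\mathbf S\rangle\neq 0$, and set $H(\lambda)=H_0+\lambda V$. Then there exists $\lambda_0>0$ such that for all $0<|\lambda|<\lambda_0$: (1) $H(\lambda)$ has a unique ground state $|\psi(\lambda)\rangle$, and it is not a stabilizer state; (2) $\delta_{\mathrm{STAB}}(H(\lambda))>0$.
   Context: A stabilizer group $\mathbf S$ is an abelian subgroup of the $n$-qubit Pauli group $\{\pm1,\pm i\}\cdot\{\mathbb 1,X,Y,Z\}^{\otimes n}$ not containing $-\mathbb 1$. A pure stabilizer state is the unique common $+1$ eigenvector of a stabilizer group with $n$ independent generators. A stabilizer Hamiltonian is $H=-\sum_{g\in\mathrm{gen}(\mathbf S)} g$ for a stabilizer group $\mathbf S$ and an independent generating set $\mathrm{gen}(\mathbf S)$ of Hermitian Pauli operators. $\mathrm{STAB}_n$ is the convex hull of all pure stabilizer state projectors. For Hermitian $H$: $E_{\mathrm{STAB}}(H)=\min_{\rho\in\mathrm{STAB}_n}\mathrm{tr}(H\rho)$, $E_{\mathrm{gs}}(H)$ is its smallest eigenvalue, and $\delta_{\mathrm{STAB}}(H)=E_{\mathrm{STAB}}(H)-E_{\mathrm{gs}}(H)$. *)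

From HB Require Import structures.
From mathcomp Require Import all_boot all_order all_algebra.
From mathcomp Require Import complex.
From mathcomp Require Import reals.
Set Implicit Arguments. Unset Strict Implicit. Unset Printing Implicit Defensive.
Import Order.TTheory GRing.Theory Num.Theory.
Local Open Scope ring_scope.
Local Open Scope complex_scope.

Section Defs.
Variable R : realType.
Local Notation C := R[i].
Variable n : nat.
(* the n-qubit Hilbert space (C^2)^{(x) n} = C^(2^n); basis index i : 'I_(2^n),
   bit k of i (odd (i %/ 2^k)) is the computational-basis value of qubit k *)
Local Notation N := (2 ^ n)%N.
Local Notation Mat := 'M[C]_N.
Local Notation Vec := 'cV[C]_N.

Definition hadj (m p : nat) (A : 'M[C]_(m, p)) : 'M[C]_(p, m) :=
  (map_mx (fun z : C => z^*) A)^T.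

Definition is_hermitian (A : Mat) : Prop := hadj A = A.

Inductive pauli := PI | PX | PY | PZ.

Definition pauli_entry (p : pauli) (a b : bool) : C :=
  match p, a, b with
  | PI, false, false => 1 | PI, true, true => 1
  | PX, false, true => 1 | PX, true, false => 1
  | PY, false, true => - 'i | PY, true, false => 'i
  | PZ, false, false => 1 | PZ, true, true => -1
  | _, _, _ => 0
  end.

(* the tensor product P_0 (x) ... (x) P_{n-1} of single-qubit Paulis *)
Definition pauli_string (P : 'I_n -> pauli) : Mat :=
  \matrix_(i < N, j < N)
    \prod_(k < n) pauli_entry (P k) (odd (i %/ 2 ^ k)) (odd (j %/ 2 ^ k)).

Definition is_pauli (A : Mat) : Prop :=
  exists (c : nat) (P : 'I_n -> pauli), A = ('i ^+ c) *: pauli_string P.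

(* the group generated by g : 'I_m -> Mat (elements of the Pauli group have
   finite order, so the generated group consists of finite products) *)
Definition gen_prod (m : nat) (g : 'I_m -> Mat) (l : seq 'I_m) : Mat :=
  \big[mulmx/1%:M]_(i <- l) g i.

Definition generated (m : nat) (g : 'I_m -> Mat) (A : Mat) : Prop :=
  exists l : seq 'I_m, A = gen_prod g l.

Definition stab_gens (m : nat) (g : 'I_m -> Mat) : Prop :=
  [/\ forall i, is_pauli (g i),
      forall i j, g i *m g j = g j *m g i,
      ~ generated g (- 1%:M) &
      forall i, ~ exists l : seq 'I_m,
          all (fun j => j != i) l /\ g i = gen_prod g l].

Definition stab_hamiltonian (H : Mat) : Prop :=
  exists (m : nat) (g : 'I_m -> Mat),
    stab_gens g /\ (forall i, is_hermitian (g i)) /\ H = - \sum_(i < m) g i.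

Definition stab_state (v : Vec) : Prop :=
  v != 0 /\
  exists g : 'I_n -> Mat, stab_gens g /\ (forall i, g i *m v = v) /\
    forall w : Vec, (forall i, g i *m w = w) -> exists c : C, w = c *: v.

Definition stab_proj (rho : Mat) : Prop :=
  exists v : Vec, stab_state v /\ hadj v *m v = 1%:M /\ rho = v *m hadj v.

Definition in_STAB (rho : Mat) : Prop :=
  exists (k : nat) (p : 'I_k -> R) (rhos : 'I_k -> Mat),
    [/\ forall i, 0 <= p i, \sum_(i < k) p i = 1,
        forall i, stab_proj (rhos i) &
        rho = \sum_(i < k) (p i)%:C *: rhos i].

Definition is_eigval (H : Mat) (a : C) : Prop :=
  exists v : Vec, v != 0 /\ H *m v = a *: v.

Definition is_Egs (H : Mat) (e : R) : Prop :=
  is_eigval H e%:C /\ forall a, is_eigval H a -> e%:C <= a.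

Definition is_ESTAB (H : Mat) (e : R) : Prop :=
  (exists rho, in_STAB rho /\ \tr (H *m rho) = e%:C) /\
  forall rho, in_STAB rho -> e%:C <= \tr (H *m rho).

Definition is_delta_STAB (H : Mat) (d : R) : Prop :=
  exists eS eg : R, is_ESTAB H eS /\ is_Egs H eg /\ d = eS - eg.

Definition spectral_gap (H : Mat) (d : R) : Prop :=
  exists e0 e1 : R, [/\ is_Egs H e0, is_eigval H e1%:C, e0 < e1,
    (forall a, is_eigval H a -> a != e0%:C -> e1%:C <= a) & d = e1 - e0].

Definition ground_state (H : Mat) (v : Vec) : Prop :=
  v != 0 /\ exists e : R, is_Egs H e /\ H *m v = e%:C *: v.

Definition unique_ground_state (H : Mat) (v : Vec) : Prop :=
  ground_state H v /\ forall w, ground_state H w -> exists c : C, w = c *: v.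

End Defs.

From HB Require Import structures.
From mathcomp Require Import all_boot all_order all_algebra.
From mathcomp Require Import complex.
From mathcomp Require Import reals.
From mathcomp Require Import spectral.
From mathcomp Require Import ring lra.
From Stdlib Require Import ClassicalEpsilon.
Import Order.TTheory GRing.Theory Num.Theory.
Local Open Scope ring_scope.
Local Open Scope complex_scope.
Set Implicit Arguments. Unset Strict Implicit. Unset Printing Implicit Defensive.

(* Let c < 1 be the largest overlap |<S|v>|^2 of a normalised stabilizer state v
   not proportional to S; it exists because, up to scalars, a stabilizer state is
   determined by a tuple of n Pauli operators, so there are finitely many of them.
   Write a ground vector z of H0 + lambda V as z = <S|z> S + u with u orthogonal
   to S.  Comparing its energy with that of S, the gap e1 - e0 of H0 gives
   (e1 - e0) |u|^2 <= 2 |lambda| K |z|^2, where K bounds |<w|V|w>| / |w|^2, so for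
   small lambda |<S|z>|^2 > c |z|^2.  Hence no ground vector is orthogonal to S and
   the ground space is a line.  Its generator psi is not proportional to S (else S
   would be an eigenvector of V), hence by the choice of c it is not a stabilizer
   state.  Finally E_STAB is a minimum over finitely many stabilizer states, and it
   equals E_gs only if one of them is a ground state, i.e. a multiple of psi. *)

Section HilbertSpace.
Variables (R : realType) (m : nat).
Local Notation C := R[i].
Local Notation Mat := 'M[C]_m.
Local Notation Vec := 'cV[C]_m.
Local Notation diagC r := (diag_mx (\row_k (r k)%:C)).

Definition abs2 (z : C) : R := complex.Re z ^+ 2 + complex.Im z ^+ 2.

Lemma abs2_ge0 z : 0 <= abs2 z.
Proof. by rewrite addr_ge0 ?sqr_ge0. Qed.

Lemma abs2E z : (abs2 z)%:C = z^* * z.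
Proof. by rewrite add_Re2_Im2 normCK mulrC. Qed.

Lemma abs2_eq0 z : (abs2 z == 0) = (z == 0).
Proof.
by rewrite -(inj_eq (@complexI _)) add_Re2_Im2 expf_eq0 /= normr_eq0.
Qed.

Lemma abs2M x y : abs2 (x * y) = abs2 x * abs2 y.
Proof. by apply: complexI; rewrite rmorphM /= !abs2E rmorphM /=; ring. Qed.

Lemma Re_realM (x : R) z : complex.Re (x%:C * z) = x * complex.Re z.
Proof. by case: z => a b /=; rewrite mul0r subr0. Qed.

Lemma abs2_real (x : R) : abs2 x%:C = x ^+ 2.
Proof. by rewrite /abs2 /= expr0n addr0. Qed.

Lemma abs20 : abs2 0 = 0.
Proof. by rewrite abs2_real expr0n. Qed.

Lemma oppr_fixed (V : lmodType C) (v : V) : - v = v -> v = 0.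
Proof.
move=> Nv; have : (2%:R : C) *: v = 0 by rewrite scaler_nat mulr2n -{1}Nv addNr.
by move/eqP; rewrite scaler_eq0 pnatr_eq0 => /eqP.
Qed.

Lemma hadjE p q (A : 'M[C]_(p, q)) i j : hadj A i j = (A j i)^*.
Proof. by rewrite !mxE. Qed.

Lemma hadjK p q (A : 'M[C]_(p, q)) : hadj (hadj A) = A.
Proof. by apply/matrixP => i j; rewrite !hadjE conjcK. Qed.

Lemma hadjM p q r (A : 'M[C]_(p, q)) (B : 'M[C]_(q, r)) :
  hadj (A *m B) = hadj B *m hadj A.
Proof.
apply/matrixP => i j; rewrite hadjE !mxE rmorph_sum.
by apply: eq_bigr => k _; rewrite !hadjE rmorphM mulrC.
Qed.

Lemma hadjD p q (A B : 'M[C]_(p, q)) : hadj (A + B) = hadj A + hadj B.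
Proof. by rewrite /hadj map_mxD linearD. Qed.

Lemma hadjN p q (A : 'M[C]_(p, q)) : hadj (- A) = - hadj A.
Proof. by rewrite /hadj map_mxN linearN. Qed.

Lemma hadj_sum p q I (r : seq I) (F : I -> 'M[C]_(p, q)) :
  hadj (\sum_(i <- r) F i) = \sum_(i <- r) hadj (F i).
Proof. by rewrite /hadj map_mx_sum linear_sum. Qed.

Lemma hadjZ p q (a : C) (A : 'M[C]_(p, q)) : hadj (a *: A) = a^* *: hadj A.
Proof. by apply/matrixP => i j; rewrite !hadjE !mxE rmorphM. Qed.

Lemma hadj1 : hadj (1%:M : Mat) = 1%:M.
Proof. by apply/matrixP => i j; rewrite !hadjE !mxE eq_sym rmorph_nat. Qed.

Lemma hadj_delta p q (i : 'I_p) (j : 'I_q) :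
  hadj (delta_mx i j : 'M[C]_(p, q)) = delta_mx j i.
Proof. by apply/matrixP => a b; rewrite !hadjE !mxE rmorph_nat andbC. Qed.

Definition inner (u w : Vec) : C := (hadj u *m w) 0 0.

Definition norm2 (w : Vec) : R := \sum_k abs2 (w k 0).

Definition expval (H : Mat) (w : Vec) : R := complex.Re (inner w (H *m w)).

Lemma innerDr u w w' : inner u (w + w') = inner u w + inner u w'.
Proof. by rewrite /inner mulmxDr mxE. Qed.

Lemma innerDl u u' w : inner (u + u') w = inner u w + inner u' w.
Proof. by rewrite /inner hadjD mulmxDl mxE. Qed.

Lemma innerBr u w w' : inner u (w - w') = inner u w - inner u w'.
Proof. by rewrite /inner mulmxBr !mxE. Qed.

Lemma innerZr u w a : inner u (a *: w) = a * inner u w.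
Proof. by rewrite /inner -scalemxAr mxE. Qed.

Lemma innerZl u w a : inner (a *: u) w = a^* * inner u w.
Proof. by rewrite /inner hadjZ -scalemxAl mxE. Qed.

Lemma innerC u w : inner w u = (inner u w)^*.
Proof. by rewrite /inner -hadjE hadjM hadjK. Qed.

Lemma inner_adj (H : Mat) u w : inner u (H *m w) = inner (hadj H *m u) w.
Proof. by rewrite /inner hadjM hadjK mulmxA. Qed.

Lemma inner_self w : inner w w = (norm2 w)%:C.
Proof.
rewrite /inner mxE rmorph_sum; apply: eq_bigr => k _.
by rewrite hadjE -abs2E.
Qed.

Lemma norm2_ge0 w : 0 <= norm2 w.
Proof. by rewrite sumr_ge0 // => k _; apply: abs2_ge0. Qed.

Lemma norm2_eq0 w : (norm2 w == 0) = (w == 0).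
Proof.
apply/idP/eqP => [|->]; last by rewrite /norm2 big1 // => k _; rewrite mxE abs20.
rewrite psumr_eq0 => [/allP w0|k _]; last exact: abs2_ge0.
apply/matrixP => i j; rewrite ord1 mxE; apply/eqP.
by rewrite -abs2_eq0; apply: w0; rewrite mem_index_enum.
Qed.

Lemma norm2_gt0 w : w != 0 -> 0 < norm2 w.
Proof. by rewrite lt_def norm2_eq0 norm2_ge0 andbT. Qed.

Lemma hadj_mul_self (v : Vec) : hadj v *m v = 1%:M <-> norm2 v = 1.
Proof.
have -> : hadj v *m v = (inner v v)%:M.
  by apply/matrixP => i j; rewrite !ord1 [RHS]mxE mulr1n.
rewrite inner_self; split=> [/matrixP /(_ 0 0)|->]; last by [].
by rewrite !mxE /= mulr1n => -[].
Qed.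

Lemma norm2Z a w : norm2 (a *: w) = abs2 a * norm2 w.
Proof. by rewrite /norm2 mulr_sumr; apply: eq_bigr => k _; rewrite mxE abs2M. Qed.

Lemma expvalZ (H : Mat) a w : expval H (a *: w) = abs2 a * expval H w.
Proof.
by rewrite /expval -scalemxAr innerZl innerZr mulrA -abs2E Re_realM.
Qed.

Lemma expvalD (A B : Mat) w : expval (A + B) w = expval A w + expval B w.
Proof. by rewrite /expval mulmxDl innerDr raddfD. Qed.

Lemma expvalZ_real (A : Mat) (a : R) w : expval (a%:C *: A) w = a * expval A w.
Proof. by rewrite /expval -scalemxAl innerZr Re_realM. Qed.

Lemma expval_eigen (A : Mat) (e : R) w : A *m w = e%:C *: w -> expval A w = e * norm2 w.
Proof. by move=> Aw; rewrite /expval Aw innerZr inner_self -rmorphM. Qed.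

Section OrthogonalDecomposition.
Variable S : Vec.
Hypothesis S_unit : norm2 S = 1.

Let S_inner : inner S S = 1.
Proof. by rewrite inner_self S_unit. Qed.

Lemma inner_orth_part w : inner S (w - inner S w *: S) = 0.
Proof. by rewrite innerBr innerZr S_inner mulr1 subrr. Qed.

Lemma expval_orth_decomp (H : Mat) (e : R) w :
  hadj H = H -> H *m S = e%:C *: S ->
  expval H w = e * abs2 (inner S w) + expval H (w - inner S w *: S).
Proof.
move=> hH HS; set a := inner S w; set u := w - a *: S.
have Su : inner S u = 0 by apply: inner_orth_part.
have uS : inner u S = 0 by rewrite innerC Su conjc0.
have -> : w = a *: S + u by rewrite /u addrC subrK.
rewrite /expval mulmxDr -scalemxAr HS innerDl !innerDr !innerZl !innerZr.
rewrite inner_adj hH HS innerZl Su uS S_inner !mulr0 !addr0 add0r mulr1.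
by rewrite mulrA -abs2E mulrC -rmorphM raddfD /= addrC.
Qed.

Lemma norm2_orth_decomp w :
  norm2 w = abs2 (inner S w) + norm2 (w - inner S w *: S).
Proof.
have S1 : 1%:M *m S = 1%:C *: S by rewrite mul1mx scale1r.
have := expval_orth_decomp w hadj1 S1.
by rewrite /expval !mul1mx !inner_self mul1r.
Qed.

Lemma abs2_inner_lt w : ~ (exists b, w = b *: S) -> abs2 (inner S w) < norm2 w.
Proof.
move=> notS; rewrite [ltRHS]norm2_orth_decomp ltrDl norm2_gt0 //.
by apply: contra_not_neq notS => /eqP; rewrite subr_eq0 => /eqP ->; exists (inner S w).
Qed.

End OrthogonalDecomposition.

Definition spectral_decomp (H U : Mat) (r : 'I_m -> R) : Prop :=
  [/\ hadj U *m U = 1%:M, U *m hadj U = 1%:M & H = hadj U *m diagC r *m U].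

Lemma hadj_trmxC p q (A : 'M[C]_(p, q)) : hadj A = map_mx Num.conj A^T.
Proof. by rewrite /hadj map_trmx. Qed.

Lemma hermitian_spectral (H : Mat) :
  hadj H = H -> exists U r, spectral_decomp H U r.
Proof.
move=> hH; have /orthomx_spectralP HE : H \is normalmx.
  by apply/normalmxP; rewrite -hadj_trmxC hH.
set U := spectralmx H in HE; set d := spectral_diag H in HE.
have Uu : U \is unitarymx by apply: spectral_unitarymx.
have UU' : U *m hadj U = 1%:M by rewrite hadj_trmxC; apply/unitarymxP.
rewrite invmx_unitary // -hadj_trmxC in HE.
have dE : diag_mx d = U *m H *m hadj U.
  by rewrite HE !mulmxA UU' mul1mx -mulmxA UU' mulmx1.
have d_herm : hadj (diag_mx d) = diag_mx d by rewrite dE !hadjM hadjK hH mulmxA.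
exists U, (fun k => complex.Re (d 0 k)); split => //; first exact: mulmx1C.
rewrite {1}HE; congr (_ *m _ *m _); apply/matrixP => a b; rewrite !mxE.
case: eqP => [->|_]; rewrite ?mulr1n ?mulr0n //.
have := congr1 (fun M : Mat => M b b) d_herm; rewrite /= hadjE !mxE eqxx !mulr1n.
by case: (d 0 b) => x y /= [] y0; congr (_ +i* _); lra.
Qed.

Section SpectralDecomposition.
Variables (H U : Mat) (r : 'I_m -> R).
Hypothesis sdH : spectral_decomp H U r.

Let UhU : hadj U *m U = 1%:M. Proof. by case: sdH. Qed.
Let UUh : U *m hadj U = 1%:M. Proof. by case: sdH. Qed.

Lemma mulmx_spectral (v : Vec) : U *m (H *m v) = diagC r *m (U *m v).
Proof. by case: sdH => _ _ ->; rewrite !mulmxA UUh mul1mx. Qed.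

Lemma inner_spectral (u w : Vec) : inner (U *m u) (U *m w) = inner u w.
Proof. by rewrite /inner hadjM -mulmxA (mulmxA (hadj U)) UhU mul1mx. Qed.

Lemma norm2_spectral (w : Vec) : norm2 (U *m w) = norm2 w.
Proof. by apply: complexI; rewrite -!inner_self inner_spectral. Qed.

Lemma expval_spectral (w : Vec) : expval H w = \sum_k r k * abs2 ((U *m w) k 0).
Proof.
rewrite /expval -inner_spectral mulmx_spectral /inner mxE raddf_sum.
apply: eq_bigr => k _.
by rewrite mul_diag_mx !mxE mulrCA -abs2E -rmorphM.
Qed.

Lemma eigen_spectral (v : Vec) a :
  H *m v = a *: v <-> forall k, (r k)%:C * (U *m v) k 0 = a * (U *m v) k 0.
Proof.
have coordE w k : (diagC r *m w) k 0 = (r k)%:C * w k 0 by rewrite mul_diag_mx !mxE.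
split => [Hv k|Hk].
  by rewrite -coordE -mulmx_spectral Hv -scalemxAr mxE.
have E : diagC r *m (U *m v) = a *: (U *m v).
  by apply/matrixP => i j; rewrite ord1 coordE Hk [RHS]mxE.
by rewrite -[H *m v]mul1mx -UhU -mulmxA mulmx_spectral E -scalemxAr mulmxA UhU mul1mx.
Qed.

Definition spectral_vec (k : 'I_m) : Vec := hadj U *m (delta_mx k 0 : Vec).

Lemma coord_spectral k (w : Vec) : (U *m w) k 0 = inner (spectral_vec k) w.
Proof. by rewrite /inner hadjM hadjK hadj_delta -mulmxA -rowE [RHS]mxE. Qed.

Lemma spectral_vec_neq0 k : spectral_vec k != 0.
Proof.
apply/eqP => /(congr1 (mulmx U)); rewrite mulmxA UUh mul1mx mulmx0.
by move/matrixP/(_ k 0); rewrite !mxE !eqxx => /eqP; rewrite oner_eq0.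
Qed.

Lemma spectral_vecP k : H *m spectral_vec k = (r k)%:C *: spectral_vec k.
Proof.
apply/eigen_spectral => j; rewrite /spectral_vec mulmxA UUh mul1mx !mxE.
by case: eqP => [->|_]; rewrite ?mulr0n ?mulr0.
Qed.

Lemma spectral_eigenvalue (v : Vec) a : v != 0 -> H *m v = a *: v -> exists k, a = (r k)%:C.
Proof.
move=> nv /eigen_spectral Hv.
have [k vk] : exists k, (U *m v) k 0 != 0.
  apply/existsP; apply: contraR nv => /existsPn v0.
  rewrite -[v]mul1mx -UhU -mulmxA; apply/eqP.
  suff -> : U *m v = 0 by rewrite mulmx0.
  by apply/matrixP => i j; rewrite ord1 [RHS]mxE; apply/eqP; have := v0 i; rewrite negbK.
by exists k; apply/esym/(mulIf vk)/Hv.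
Qed.

Lemma rayleigh_spectral e (w : Vec) :
  (forall k, r k < e -> (U *m w) k 0 = 0) -> e * norm2 w <= expval H w.
Proof.
move=> low0; rewrite expval_spectral -norm2_spectral mulr_sumr.
apply: ler_sum => k _; have [rk|ek] := ltP (r k) e.
  by rewrite low0 // abs20 !mulr0.
by rewrite ler_wpM2r // abs2_ge0.
Qed.

Lemma rayleigh_spectral_eq e (w : Vec) : (forall k, e <= r k) ->
  expval H w = e * norm2 w -> H *m w = e%:C *: w.
Proof.
move=> er; rewrite expval_spectral -norm2_spectral mulr_sumr => /eqP.
rewrite -subr_eq0 -sumrB => /eqP /psumr_eq0P eq0; apply/eigen_spectral => k.
have /eqP := eq0 (fun j _ => ltac:(by rewrite -mulrBl mulr_ge0 ?abs2_ge0 ?subr_ge0)) k isT.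
rewrite -mulrBl mulf_eq0 subr_eq0 abs2_eq0 => /orP [/eqP ->|/eqP ->] //.
by rewrite !mulr0.
Qed.

Lemma expval_spectral_bound (w : Vec) :
  `|expval H w| <= (\sum_k `|r k|) * norm2 w.
Proof.
rewrite expval_spectral mulr_suml; apply: (le_trans (ler_norm_sum _ _ _)).
apply: ler_sum => k _; rewrite normrM (ger0_norm (abs2_ge0 _)) ler_wpM2l //.
rewrite -norm2_spectral /norm2 (bigD1 k) //= lerDl.
by rewrite sumr_ge0 // => j _; apply: abs2_ge0.
Qed.

End SpectralDecomposition.

Lemma hermitian_expval_bound (V : Mat) : hadj V = V ->
  exists2 K, 0 <= K & forall w, `|expval V w| <= K * norm2 w.
Proof.
move=> /hermitian_spectral [U [r sdV]]; exists (\sum_k `|r k|).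
  by rewrite sumr_ge0.
exact: expval_spectral_bound sdV.
Qed.

Lemma perturbed_ground_fidelity (H0 W : Mat) (S z : Vec) (e0 e1 L c e : R) :
  hadj H0 = H0 -> H0 *m S = e0%:C *: S -> norm2 S = 1 ->
  (forall u, inner S u = 0 -> e1 * norm2 u <= expval H0 u) ->
  (forall w, `|expval W w| <= L * norm2 w) ->
  e0 < e1 -> 2 * L < (e1 - e0) * (1 - c) ->
  e <= expval (H0 + W) S -> z != 0 -> (H0 + W) *m z = e%:C *: z ->
  c * norm2 z < abs2 (inner S z).
Proof.
move=> hH0 H0S S1 gap Wbound e01 small eS nz Hz.
set a := inner S z; set u := z - a *: S.
have z_dec : norm2 z = abs2 a + norm2 u by apply: norm2_orth_decomp.
have H0z_dec : expval H0 z = e0 * abs2 a + expval H0 u by apply: expval_orth_decomp.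
have H0u : e1 * norm2 u <= expval H0 u by apply/gap/inner_orth_part.
have Hz_e : e * norm2 z = expval H0 z + expval W z by rewrite -expvalD (expval_eigen Hz).
have e_le : e <= e0 + L.
  move: (Wbound S) eS; rewrite expvalD (expval_eigen H0S) S1 !mulr1 ler_norml.
  by case/andP => _; lra.
have Wz : - (L * norm2 z) <= expval W z by move: (Wbound z); rewrite ler_norml => /andP[].
have z_pos : 0 < norm2 z by apply: norm2_gt0.
have u_small : (e1 - e0) * norm2 u <= 2 * L * norm2 z.
  have := abs2_ge0 a; have := norm2_ge0 u; nra.
have : (e1 - e0) * norm2 u < (e1 - e0) * ((1 - c) * norm2 z).
  by apply: (le_lt_trans u_small); rewrite mulrA ltr_pM2r.
rewrite ltr_pM2l ?subr_gt0 //; lra.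
Qed.

End HilbertSpace.

Definition pauli_code (p : pauli) : 'I_4 :=
  match p with PI => inord 0 | PX => inord 1 | PY => inord 2 | PZ => inord 3 end.

Definition pauli_of_code (k : 'I_4) : pauli :=
  match val k with 0 => PI | 1 => PX | 2 => PY | _ => PZ end%N.

Lemma pauli_codeK : cancel pauli_code pauli_of_code.
Proof. by case; rewrite /pauli_of_code /= inordK. Qed.

HB.instance Definition _ := Finite.copy pauli (can_type pauli_codeK).

Lemma finite_choice (T : finType) (X : eqType) (P : T -> X -> Prop) :
  exists s : seq X, (forall x, x \in s -> exists t, P t x) /\
    forall t, (exists x, P t x) -> exists2 x, x \in s & P t x.
Proof.
pose Q t (o : option X) := if o is Some x then P t x else ~ exists x, P t x.
have Qex t : exists o, Q t o.
  by case: (classic (exists x, P t x)) => [[x Ptx]|nP]; [exists (Some x) | exists None].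
pose f t := epsilon (inhabits None) (Q t).
have fQ t : Q t (f t) by apply: epsilon_spec.
exists (pmap f (enum T)); split => [x|t [x Ptx]].
  by rewrite mem_pmap => /mapP [t _ ft]; exists t; move: (fQ t); rewrite -ft.
move: (fQ t); rewrite /Q; case ft: (f t) => [y|] Qt; last by case: Qt; exists x.
by exists y => //; rewrite mem_pmap -ft map_f // mem_enum.
Qed.

Lemma seq_argmin (T : eqType) d (O : orderType d) (f : T -> O) (s : seq T) x0 :
  x0 \in s -> exists2 x, x \in s & forall y, y \in s -> (f x <= f y)%O.
Proof.
rewrite -index_mem => x0s.
case: (@arg_minP _ _ _ (Ordinal x0s) xpredT (fun i => f (nth x0 s i)) isT) => i _ imin.
exists (nth x0 s i); first exact: mem_nth.
move=> y ys; have ys' : (index y s < size s)%N by rewrite index_mem.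
by rewrite -(nth_index x0 ys); apply: (imin (Ordinal ys')).
Qed.

Section Bits.
Local Open Scope nat_scope.

Lemma bits_inj m a b : a < 2 ^ m -> b < 2 ^ m ->
  (forall k, k < m -> odd (a %/ 2 ^ k) = odd (b %/ 2 ^ k)) -> a = b.
Proof.
elim: m a b => [|m IH] a b; first by rewrite expn0 !ltnS !leqn0 => /eqP -> /eqP ->.
move=> am bm ab.
have half : a./2 = b./2.
  rewrite -!divn2; apply: IH; rewrite ?ltn_divLR // -?expnSr // => k km.
  by rewrite -!divnMA -expnS ab.
have := ab 0 (ltn0Sn _); rewrite expn0 !divn1 => odd_ab.
by rewrite -[a]odd_double_half -[b]odd_double_half half odd_ab.
Qed.

Lemma odd_pow2_div i k : odd (2 ^ i %/ 2 ^ k) = (i == k).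
Proof.
case: (ltngtP k i) => [ki|ik|->]; last by rewrite divnn expn_gt0.
  by rewrite -(subnK (ltnW ki)) expnD mulnK ?expn_gt0 // oddX subn_eq0 leqNgt ki.
by rewrite divn_small // ltn_exp2l.
Qed.

End Bits.

Section Qubits.
Variables (R : realType) (n : nat).
Local Notation C := R[i].
Local Notation N := (2 ^ n)%N.
Local Notation Mat := 'M[C]_N.
Local Notation Vec := 'cV[C]_N.

Lemma pow2_gt0 : (0 < N)%N.
Proof. by rewrite expn_gt0. Qed.

Lemma Egs_unique (H : Mat) e e' : is_Egs H e -> is_Egs H e' -> e = e'.
Proof. by move=> [? emin] [? emin']; apply/eqP; rewrite eq_le -!lecR emin ?emin'. Qed.

Lemma spectral_is_eigval (H U : Mat) r k :
  spectral_decomp H U r -> is_eigval H (r k)%:C.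
Proof.
move=> sdH; exists (spectral_vec U k).
by split; [exact: spectral_vec_neq0 sdH k | exact: spectral_vecP sdH k].
Qed.

Lemma Egs_le_spectral (H U : Mat) r e k :
  spectral_decomp H U r -> is_Egs H e -> e <= r k.
Proof. by move=> sdH [_ emin]; rewrite -lecR emin //; apply: spectral_is_eigval sdH. Qed.

Lemma hermitian_Egs (H : Mat) : hadj H = H -> exists e, is_Egs H e.
Proof.
move=> /hermitian_spectral [U [r sdH]].
case: (@arg_minP _ _ _ (Ordinal pow2_gt0) xpredT r isT) => k _ kmin.
exists (r k); split; first exact: spectral_is_eigval sdH.
by move=> a [v [nv /(spectral_eigenvalue sdH nv) [j ->]]]; rewrite lecR kmin.
Qed.

Lemma Egs_expval (H : Mat) e w : hadj H = H -> is_Egs H e -> e * norm2 w <= expval H w.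
Proof.
move=> /hermitian_spectral [U [r sdH]] He; apply: (rayleigh_spectral sdH) => k.
by rewrite ltNge (Egs_le_spectral k sdH He).
Qed.

Lemma Egs_expval_eq (H : Mat) e w : hadj H = H -> is_Egs H e ->
  expval H w = e * norm2 w -> H *m w = e%:C *: w.
Proof.
move=> /hermitian_spectral [U [r sdH]] He; apply: (rayleigh_spectral_eq sdH) => k.
exact: Egs_le_spectral sdH He.
Qed.

Lemma gap_expval (H : Mat) (S u : Vec) e0 e1 :
  hadj H = H -> is_Egs H e0 ->
  (forall a, is_eigval H a -> a != e0%:C -> e1%:C <= a) ->
  unique_ground_state H S -> inner S u = 0 -> e1 * norm2 u <= expval H u.
Proof.
move=> /hermitian_spectral [U [r sdH]] He0 gap [_ uniq] Su.
apply: (rayleigh_spectral sdH) => k rk.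
(* a spectral component below e1 has eigenvalue e0, hence lies along S *)
have rk0 : r k = e0.
  apply: contraTeq rk => rk0; rewrite -leNgt -lecR gap ?(inj_eq (@complexI _)) //.
  exact: spectral_is_eigval sdH.
have [c vkS] : exists c, spectral_vec U k = c *: S.
  apply: uniq; split; first exact: spectral_vec_neq0 sdH k.
  by exists e0; split => //; rewrite -rk0; exact: spectral_vecP sdH k.
by rewrite coord_spectral vkS innerZl Su mulr0.
Qed.

Definition pauli_elt (c : 'I_4) (P : {ffun 'I_n -> pauli}) : Mat :=
  'i ^+ c *: pauli_string R P.

Lemma is_pauli_elt (A : Mat) : is_pauli A -> exists c P, A = pauli_elt c P.
Proof.
move=> [c [P ->]]; exists (inord (c %% 4)), [ffun k => P k].
have i4 : ('i : C) ^+ 4 = 1 by rewrite (exprM _ 2 2) sqr_i expr2 mulrNN mulr1.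
rewrite /pauli_elt inordK ?ltn_pmod // {1}(divn_eq c 4) exprD mulnC exprM i4 expr1n mul1r.
by congr (_ *: _); apply/matrixP => i j; rewrite !mxE; apply: eq_bigr => k _; rewrite ffunE.
Qed.

Definition stab_code := {ffun 'I_n -> 'I_4 * {ffun 'I_n -> pauli}}.

Definition code_gens (t : stab_code) (i : 'I_n) : Mat := pauli_elt (t i).1 (t i).2.

Definition fixes (g : 'I_n -> Mat) (v : Vec) : Prop := forall i, g i *m v = v.

Lemma stab_state_code (v : Vec) : stab_state v ->
  exists t, fixes (code_gens t) v /\ forall w, fixes (code_gens t) w -> exists c, w = c *: v.
Proof.
move=> [_ [g [[gP _ _ _] [gv uniq]]]].
have [t gt] : exists t : stab_code, forall i, g i = code_gens t i.
  have [f gf] : exists f : 'I_n -> 'I_4 * {ffun 'I_n -> pauli},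
      forall i, g i = pauli_elt (f i).1 (f i).2.
    apply: (@fin_all_exists _ (fun _ => ('I_4 * {ffun 'I_n -> pauli})%type)
      (fun i u => g i = pauli_elt u.1 u.2)) => i.
    have [c [P ->]] := is_pauli_elt (gP i).
    by exists (c, P).
  by exists [ffun i => f i] => i; rewrite /code_gens ffunE.
by exists t; split=> [i|w wt]; [rewrite -gt | apply: uniq => i; rewrite gt].
Qed.

Lemma stab_stateZ (v : Vec) b : stab_state v -> b != 0 -> stab_state (b *: v).
Proof.
move=> [nv [g [gS [gv uniq]]]] nb; split; first by rewrite scaler_eq0 negb_or nb.
exists g; split=> //; split=> [i|w /uniq [c ->]]; first by rewrite -scalemxAr gv.
by exists (c / b); rewrite scalerA divfK.
Qed.

Lemma norm2_normalize (v : Vec) : v != 0 -> exists2 b, b != 0 & norm2 (b *: v) = 1.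
Proof.
move=> nv; have v_pos := norm2_gt0 nv.
have sqrt_pos : 0 < Num.sqrt (norm2 v) by rewrite sqrtr_gt0.
exists (Num.sqrt (norm2 v))^-1%:C; first by rewrite eq_complex /= negb_and invr_eq0 gt_eqF.
by rewrite norm2Z abs2_real exprVn sqr_sqrtr ?mulVf ?gt_eqF // ltW.
Qed.

(* A stabilizer state is determined up to a scalar by the finitely many possible
   codes of its generators. *)
Theorem stab_rays : exists s : seq Vec,
  (forall u, u \in s -> stab_state u /\ norm2 u = 1) /\
  forall v, stab_state v -> exists2 u, u \in s & exists b, v = b *: u.
Proof.
have [s [sP sall]] := finite_choice
  (fun t u => [/\ stab_state u, norm2 u = 1 & fixes (code_gens t) u]).
exists s; split=> [u /sP [t []] //|v sv].
have [t [tv uniq]] := stab_state_code sv.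
have [b nb vb] := norm2_normalize (proj1 sv).
have [|u us [su u1 tu]] := sall t.
  exists (b *: v); split=> //; first exact: stab_stateZ.
  by move=> i; rewrite -scalemxAr tv.
have [c uc] := uniq u tu.
have nc : c != 0.
  apply/eqP => c0; move: u1; rewrite uc c0 norm2Z abs20 mul0r => /eqP.
  by rewrite eq_sym oner_eq0.
by exists u => //; exists c^-1; rewrite uc scalerA mulVf ?scale1r.
Qed.

Definition zstring (i : 'I_n) : Mat := pauli_string R (fun k => if k == i then PZ else PI).

Definition zsign (i : 'I_n) (a : nat) : C := if odd (a %/ 2 ^ i) then -1 else 1.

Lemma zstringE i (a b : 'I_N) : zstring i a b = (a == b)%:R * zsign i a.
Proof.
rewrite /zstring /zsign mxE; have [<-|nab] := eqVneq a b.
  rewrite (bigD1 i) //= big1 => [|k /negPf ->]; last by case: odd.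
  by rewrite !eqxx mulr1 mul1r; case: odd.
have [k abk] : exists k : 'I_n, odd (a %/ 2 ^ k) != odd (b %/ 2 ^ k).
  apply/existsP; apply: contraR nab => /existsPn ab; apply/eqP/val_inj.
  apply: (@bits_inj n); [exact: ltn_ord | exact: ltn_ord | move=> k kn].
  by apply/eqP; rewrite -[_ == _]negbK (ab (Ordinal kn)).
rewrite (bigD1 k) //= mul0r; move: abk.
by case: (k == i); case: odd; case: odd; rewrite //= mul0r.
Qed.

Lemma zstring_coord i (v : Vec) a : (zstring i *m v) a 0 = zsign i a * v a 0.
Proof.
rewrite mxE (bigD1 a) //= zstringE eqxx mul1r big1 ?addr0 // => b nb.
by rewrite zstringE eq_sym (negPf nb) mul0r mul0r.
Qed.

Lemma zstring_diag i : zstring i = diag_mx (\row_a zsign i a).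
Proof. by apply/matrixP => a b; rewrite zstringE !mxE eq_sym mulrC mulr_natr. Qed.

Definition basis_vec (a : 'I_N) : Vec := delta_mx a 0.

Lemma basis_vec_neq0 a : basis_vec a != 0.
Proof. by apply/eqP => /matrixP /(_ a 0); rewrite !mxE !eqxx => /eqP; rewrite oner_eq0. Qed.

Lemma zstring_basis i (a : 'I_N) :
  zstring i *m basis_vec a = zsign i a *: basis_vec a.
Proof.
apply/matrixP => b j; rewrite ord1 zstring_coord !mxE.
by have [->|] := eqVneq b a; rewrite ?mulr1 ?mulr0.
Qed.

Lemma pow2_lt_N (i : 'I_n) : (2 ^ i < N)%N.
Proof. by rewrite ltn_exp2l. Qed.

Let zero_idx : 'I_N := Ordinal pow2_gt0.
Let flip_idx (i : 'I_n) : 'I_N := Ordinal (pow2_lt_N i).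

Lemma zsign_zero i : zsign i zero_idx = 1.
Proof. by rewrite /zsign /= div0n. Qed.

Lemma zsign_flip j i : zsign j (flip_idx i) = if j == i then -1 else 1.
Proof. by rewrite /zsign /= odd_pow2_div eq_sym. Qed.

Lemma gen_prod_fixes m (g : 'I_m -> Mat) l (v : Vec) :
  (forall j, j \in l -> g j *m v = v) -> gen_prod g l *m v = v.
Proof.
elim: l => [|j l IH] gv; first by rewrite /gen_prod big_nil mul1mx.
rewrite /gen_prod big_cons -mulmxA IH => [|k kl]; last by rewrite gv // inE kl orbT.
by rewrite gv ?mem_head.
Qed.

(* Every product of Z strings fixes |0...0>, so it is not -1; the product of the
   strings other than Z_i fixes the basis state with only qubit i set, which Z_i
   negates. *)
Lemma zstring_stab_gens : stab_gens zstring.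
Proof.
split=> [i|i j|[l l_neg1]|i [l [l_i gi]]].
- by exists 0%N, (fun k => if k == i then PZ else PI); rewrite expr0 scale1r.
- by rewrite !zstring_diag diag_mx_comm.
- have : gen_prod zstring l *m basis_vec zero_idx = basis_vec zero_idx.
    by apply: gen_prod_fixes => j _; rewrite zstring_basis zsign_zero scale1r.
  rewrite -l_neg1 mulNmx mul1mx => /oppr_fixed /eqP.
  by rewrite (negPf (basis_vec_neq0 _)).
- have : gen_prod zstring l *m basis_vec (flip_idx i) = basis_vec (flip_idx i).
    apply: gen_prod_fixes => j jl.
    by rewrite zstring_basis zsign_flip (negPf (allP l_i j jl)) scale1r.
  rewrite -gi zstring_basis zsign_flip eqxx scaleN1r => /oppr_fixed /eqP.
  by rewrite (negPf (basis_vec_neq0 _)).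
Qed.

Lemma zero_state_stab : stab_state (basis_vec zero_idx).
Proof.
split; first exact: basis_vec_neq0.
exists zstring; split; first exact: zstring_stab_gens.
split=> [i|w wfix]; first by rewrite zstring_basis zsign_zero scale1r.
exists (w zero_idx 0); apply/matrixP => j k; rewrite ord1 !mxE.
have [->|nj] := eqVneq j zero_idx; first by rewrite eqxx mulr1.
rewrite /= mulr0.
have [i ji] : exists i : 'I_n, odd (j %/ 2 ^ i).
  apply/existsP; apply: contraR nj => /existsPn j0; apply/eqP/val_inj => /=.
  apply: (@bits_inj n); [exact: ltn_ord | exact: pow2_gt0 | move=> i ilt].
  by rewrite div0n; apply/negbTE/(j0 (Ordinal ilt)).
have := congr1 (fun M : Vec => M j 0) (wfix i).
by rewrite /= zstring_coord /zsign ji mulN1r => /(@oppr_fixed R C^o).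
Qed.

Lemma stab_fidelity_bound (S : Vec) : norm2 S = 1 ->
  exists c, [/\ 0 <= c, c < 1 & forall v, stab_state v ->
    ~ (exists b, v = b *: S) -> abs2 (inner S v) <= c * norm2 v].
Proof.
move=> S1; have [s [s_stab s_all]] := stab_rays.
exists (\big[Num.max/0]_(u <- s | abs2 (inner S u) < 1) abs2 (inner S u)); split.
- exact: bigmax_ge_id.
- by apply: bigmax_lt => //; exact: ltr01.
move=> v sv vS; have [u us [b vbu]] := s_all v sv; have [_ u1] := s_stab u us.
have uS : ~ (exists b, u = b *: S).
  by move=> [b' ubS]; apply: vS; exists (b * b'); rewrite vbu ubS scalerA.
have fid_u : abs2 (inner S u) < 1 by rewrite -u1; apply: abs2_inner_lt.
rewrite vbu innerZr abs2M norm2Z mulrCA ler_wpM2l ?abs2_ge0 // u1 mulr1.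
exact: (le_bigmax_seq _ _ _ _ us fid_u).
Qed.

Lemma inner_hermitian (H : Mat) (v : Vec) :
  hadj H = H -> inner v (H *m v) = (expval H v)%:C.
Proof.
move=> hH; apply/esym/RRe_real; rewrite CrealE.
by change ((inner v (H *m v))^*%C == inner v (H *m v)); rewrite -innerC inner_adj hH.
Qed.

Lemma trace_proj (H : Mat) (v : Vec) : \tr (H *m (v *m hadj v)) = inner v (H *m v).
Proof. by rewrite mulmxA mxtrace_mulC /mxtrace big_ord1. Qed.

Lemma STAB_trace_ge (H : Mat) (e : R) : hadj H = H ->
  (forall v, stab_state v -> norm2 v = 1 -> e <= expval H v) ->
  forall rho, in_STAB rho -> e%:C <= \tr (H *m rho).
Proof.
move=> hH e_le rho [k [p [rhos [p_ge0 p1 rhos_stab ->]]]].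
have tr_rhos i : exists2 x, e <= x & \tr (H *m rhos i) = x%:C.
  have [v [sv [/hadj_mul_self v1 ->]]] := rhos_stab i.
  by exists (expval H v); [apply: e_le | rewrite trace_proj inner_hermitian].
have [x e_x tr_x] := fin_all_exists2 tr_rhos.
rewrite mulmx_sumr linear_sum /=.
under eq_bigr => i _ do rewrite -scalemxAr linearZ /= tr_x -rmorphM.
rewrite -rmorph_sum lecR -[e]mul1r -p1 mulr_suml.
by apply: ler_sum => i _; apply: ler_wpM2l.
Qed.

Lemma ESTAB_attained (H : Mat) : hadj H = H ->
  exists v, [/\ stab_state v, norm2 v = 1 & is_ESTAB H (expval H v)].
Proof.
move=> hH; have [s [s_stab s_all]] := stab_rays.
have [u0 u0s _] := s_all _ zero_state_stab.
have [v vs vmin] := seq_argmin (expval H) u0s.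
have [sv v1] := s_stab v vs.
exists v; split=> //; split.
  exists (v *m hadj v); split; last by rewrite trace_proj inner_hermitian.
  exists 1%N, (fun=> 1), (fun=> v *m hadj v); split=> //; first by rewrite big_ord1.
    by exists v; split=> //; split; [exact: (proj2 (hadj_mul_self v) v1) |].
  by rewrite big_ord1 scale1r.
apply: STAB_trace_ge => // w sw w1.
have [u us [b wbu]] := s_all w sw; have [_ u1] := s_stab u us.
have b1 : abs2 b = 1 by move: w1; rewrite wbu norm2Z u1 mulr1.
by rewrite wbu expvalZ b1 mul1r vmin.
Qed.

Theorem delta_STAB_gt0 (H : Mat) (psi : Vec) : hadj H = H ->
  unique_ground_state H psi -> ~ stab_state psi ->
  exists d, is_delta_STAB H d /\ 0 < d.
Proof.
move=> hH [[npsi _] psi_uniq] psi_nstab.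
have [v [sv v1 ES]] := ESTAB_attained hH.
have [e He] := hermitian_Egs hH.
exists (expval H v - e); split; first by exists (expval H v), e.
have := @Egs_expval H e v hH He; rewrite v1 mulr1 subr_gt0 le_eqVlt => /orP [/eqP ev|//].
have Hv : H *m v = e%:C *: v by apply: (Egs_expval_eq hH He); rewrite v1 mulr1 ev.
have [c vc] := psi_uniq v (conj (proj1 sv) (ex_intro _ e (conj He Hv))).
have nc : c != 0 by apply: contraNneq (proj1 sv) => c0; rewrite vc c0 scale0r.
case: psi_nstab; rewrite -[psi]scale1r -(mulVf nc) -scalerA -vc.
by apply: stab_stateZ; rewrite ?invr_eq0.
Qed.

Lemma stab_hamiltonian_hermitian (H : Mat) : stab_hamiltonian H -> hadj H = H.
Proof.
move=> [m [g [_ [g_herm ->]]]]; rewrite hadjN hadj_sum.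
by congr (- _); apply: eq_bigr => i _; apply: g_herm.
Qed.

Lemma hermitian_perturb (H0 V : Mat) (lam : R) : hadj H0 = H0 -> hadj V = V ->
  hadj (H0 + lam%:C *: V) = H0 + lam%:C *: V.
Proof. by move=> hH0 hV; rewrite hadjD hadjZ hH0 hV; congr (_ + _ *: _); apply: conjc_real. Qed.

Lemma perturbed_not_eigvec (H0 V : Mat) (S : Vec) (e0 lam e : R) :
  hadj S *m S = 1%:M -> H0 *m S = e0%:C *: S ->
  (1%:M - S *m hadj S) *m V *m S != 0 -> lam != 0 ->
  (H0 + lam%:C *: V) *m S != e%:C *: S.
Proof.
move=> S1 H0S VS lam0; apply: contra_neq VS => HS.
have VSe : V *m S = (lam^-1 * (e - e0))%:C *: S.
  have lamC : lam%:C != 0 by rewrite eq_complex /= negb_and lam0.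
  apply: (scalerI lamC); rewrite scalemxAl scalerA -rmorphM mulrA mulfV // mul1r.
  by rewrite rmorphB scalerBl -HS mulmxDl H0S addrAC subrr add0r.
by rewrite -mulmxA VSe -scalemxAr mulmxBl mul1mx -mulmxA S1 mulmx1 subrr scaler0.
Qed.

Lemma perturbed_ground_not_stab (H0 V : Mat) (S psi : Vec) (e0 lam e c : R) :
  hadj S *m S = 1%:M -> H0 *m S = e0%:C *: S ->
  (1%:M - S *m hadj S) *m V *m S != 0 -> lam != 0 ->
  (forall v, stab_state v -> ~ (exists b, v = b *: S) ->
     abs2 (inner S v) <= c * norm2 v) ->
  psi != 0 -> (H0 + lam%:C *: V) *m psi = e%:C *: psi ->
  c * norm2 psi < abs2 (inner S psi) -> ~ stab_state psi.
Proof.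
move=> S1 H0S VS lam0 c_stab npsi Hpsi overlap psi_stab.
have [[b psiS]|nS] := classic (exists b, psi = b *: S); last first.
  by have := c_stab psi psi_stab nS; rewrite leNgt overlap.
have b0 : b != 0 by apply: contraNneq npsi => b0; rewrite psiS b0 scale0r.
have HS : (H0 + lam%:C *: V) *m S = e%:C *: S.
  by apply: (scalerI b0); rewrite scalemxAr -psiS Hpsi psiS !scalerA mulrC.
by have := perturbed_not_eigvec e S1 H0S VS lam0; rewrite HS eqxx.
Qed.

Lemma ground_overlap_unique (H : Mat) (S psi : Vec) (e c : R) :
  0 <= c -> is_Egs H e ->
  (forall z, z != 0 -> H *m z = e%:C *: z -> c * norm2 z < abs2 (inner S z)) ->
  ground_state H psi -> unique_ground_state H psi.
Proof.
move=> c0 He overlap psi_gs; split=> // w [nw [e' [He' Hw]]].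
have [npsi [e'' [He'' Hpsi]]] := psi_gs.
rewrite (Egs_unique He' He) in Hw; rewrite (Egs_unique He'' He) in Hpsi.
have no_orth z : H *m z = e%:C *: z -> inner S z = 0 -> z = 0.
  move=> Hz Sz; apply/eqP/contraT => nz.
  by have := overlap z nz Hz; rewrite Sz abs20 ltNge mulr_ge0 ?norm2_ge0.
set a := inner S psi; set b := inner S w.
have a0 : a != 0 by apply: contraNneq npsi => a0; apply/eqP/(no_orth _ Hpsi a0).
have : a *: w - b *: psi = 0.
  apply: (no_orth (a *: w - b *: psi)); last by rewrite innerBr !innerZr mulrC subrr.
  rewrite mulmxDr mulmxN -!scalemxAr Hw Hpsi !scalerA scalerDr scalerN !scalerA.
  by rewrite [a * _]mulrC [b * _]mulrC.
move/eqP; rewrite subr_eq0 => /eqP abw.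
by exists (a^-1 * b); rewrite -scalerA -abw scalerA mulVf ?scale1r.
Qed.

End Qubits.

Unset Implicit Arguments.

Theorem lemma1 (R : realType) (n : nat) (H0 V : 'M[R[i]]_(2 ^ n))
    (S : 'cV[R[i]]_(2 ^ n)) :
  stab_hamiltonian H0 ->
  unique_ground_state H0 S ->
  hadj S *m S = 1%:M ->
  (exists Delta : R, 0 < Delta /\ spectral_gap H0 Delta) ->
  is_hermitian V ->
  (1%:M - S *m hadj S) *m V *m S != 0 ->
  exists lambda0 : R, 0 < lambda0 /\
    forall lambda : R, 0 < `|lambda| < lambda0 ->
      (exists psi : 'cV[R[i]]_(2 ^ n),
          unique_ground_state (H0 + lambda%:C *: V) psi /\ ~ stab_state psi) /\
      (exists d : R, is_delta_STAB (H0 + lambda%:C *: V) d /\ 0 < d).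
Proof.
move=> H0_stab S_gs S1 [_ [_ [e0 [e1 [He0 _ e01 gap _]]]]] hV VS.
have hH0 := stab_hamiltonian_hermitian H0_stab.
have S_unit : norm2 S = 1 by apply/hadj_mul_self.
have H0S : H0 *m S = e0%:C *: S.
  by case: S_gs => -[_ [e [He HS]]] _; rewrite -(Egs_unique He He0).
have [K K0 V_bound] := hermitian_expval_bound hV.
have [c [c0 c1 c_stab]] := stab_fidelity_bound S_unit.
have gap_pos : 0 < (e1 - e0) * (1 - c) by rewrite mulr_gt0 ?subr_gt0.
(* K + 1 rather than K, which may vanish *)
exists ((e1 - e0) * (1 - c) / (2 * (K + 1))); split.
  by rewrite divr_gt0 // mulr_gt0 // ltr_wpDl.
move=> lam /andP [lam_gt0]; rewrite ltr_pdivlMr ?mulr_gt0 ?ltr_wpDl // => lam_small.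
pose H := H0 + lam%:C *: V.
have hH : hadj H = H by apply: hermitian_perturb.
have [e He] := hermitian_Egs hH.
have overlap z : z != 0 -> H *m z = e%:C *: z -> c * norm2 z < abs2 (inner S z).
  apply: (perturbed_ground_fidelity hH0 H0S S_unit _ _ e01 (L := `|lam| * K)).
  - by move=> u; apply: gap_expval hH0 He0 gap S_gs.
  - by move=> w; rewrite expvalZ_real normrM -mulrA ler_wpM2l.
  - by apply: le_lt_trans lam_small; have := normr_ge0 lam; nra.
  - by have := Egs_expval S hH He; rewrite S_unit mulr1.
have [psi [psi_neq0 Hpsi]] := He.1.
have psi_gs : ground_state H psi by split=> //; exists e.
have psi_uniq := ground_overlap_unique c0 He overlap psi_gs.
have psi_nstab : ~ stab_state psi.
  apply: (perturbed_ground_not_stab S1 H0S VS _ c_stab psi_neq0 Hpsi).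
    by rewrite -normr_gt0.
  exact: overlap.
split; first by exists psi.
exact: delta_STAB_gt0 hH psi_uniq psi_nstab.
Qed.
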